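(* Let $\lambda>0$, let $\mathbf r_\lambda=(\mathbf r_{1\lambda},\dots,\mathbf r_{N\lambda})\in\mathfrak R$ be any point at which $f+\lambda g$ attains its minimum over $\mathfrak R$, write $\mathbf r_{i\lambda}=|\mathbf r_{i\lambda}|(\cos\varphi_{i\lambda},\sin\varphi_{i\lambda})$, put $\omega=\sqrt{2\lambda}$ and let $\mathbf r_\lambda(t)=(\mathbf r_{1\lambda}(t),\dots,\mathbf r_{N\lambda}(t))$ with $\mathbf r_{i\lambda}(t)=|\mathbf r_{i\lambda}|(\cos(\varphi_{i\lambda}+\omega t),\sin(\varphi_{i\lambda}+\omega t))$, $t\ge0$. Then this trajectory is stationary and periodic, and for every $t\ge 0$ and $i=1,\dots,N$, $$\frac{\partial f}{\partial \mathbf r_i}[\mathbf r_\lambda(t)]=-\lambda\frac{\partial g}{\partial \mathbf r_i}[\mathbf r_\lambda(t)],\qquad \mathbf F_i[\mathbf r_\lambda(t)]=-2\lambda m_i\mathbf r_{i\lambda}(t).$$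
   Context: Fix $N\ge 2$, masses $m_1,\dots,m_N>0$ and $\gamma>0$. Planar configuration space $\mathfrak R=\{\mathbf r=(\mathbf r_1,\dots,\mathbf r_N)\in(\mathbb R^2)^N:\ \mathbf r_i\neq\mathbf r_j \text{ for } i\neq j\}$; $f(\mathbf r)=\sum_{i<j}\frac{\gamma m_im_j}{|\mathbf r_j-\mathbf r_i|}$, $g(\mathbf r)=\sum_i m_i|\mathbf r_i|^2$; $\mathbf F_i(\mathbf r)=\sum_{j\ne i}\frac{\gamma m_im_j(\mathbf r_j-\mathbf r_i)}{|\mathbf r_j-\mathbf r_i|^3}$. For every $\lambda>0$, $f+\lambda g$ attains its minimum on $\mathfrak R$. A curve $\mathbf r(t)$, $t\ge0$, in $\mathfrak R$ is called stationary if there are constants $0<C_1\le C_2<\infty$ with $C_1\le|\mathbf r_j(t)-\mathbf r_i(t)|\le C_2$ for all $i\ne j$ and $t\ge0$. *)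

From Stdlib Require Import Reals Lra List Arith.
From Coquelicot Require Import Coquelicot.
Open Scope R_scope.

(* A planar configuration of N bodies: body k (k < N) sits at r k : R*R.
   Values of r at indices >= N are irrelevant. *)
Definition config := nat -> R * R.

Definition sumN (N : nat) (F : nat -> R) : R :=
  fold_right (fun k acc => F k + acc) 0 (seq 0 N).

Definition norm2 (v : R * R) : R := sqrt (fst v ^ 2 + snd v ^ 2).

Definition vsub (u v : R * R) : R * R := (fst u - fst v, snd u - snd v).

Definition dist (r : config) (i j : nat) : R := norm2 (vsub (r j) (r i)).

Definition in_config_space (N : nat) (r : config) : Prop :=
  forall i j, (i < N)%nat -> (j < N)%nat -> i <> j -> r i <> r j.

Definition fpot (N : nat) (gamma : R) (m : nat -> R) (r : config) : R :=
  sumN N (fun i => sumN N (fun j =>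
    if Nat.ltb i j then gamma * m i * m j / dist r i j else 0)).

Definition gmom (N : nat) (m : nat -> R) (r : config) : R :=
  sumN N (fun i => m i * norm2 (r i) ^ 2).

Definition Force (N : nat) (gamma : R) (m : nat -> R) (r : config) (i : nat)
  : R * R :=
  (sumN N (fun j => if Nat.eqb j i then 0 else
      gamma * m i * m j * fst (vsub (r j) (r i)) / dist r i j ^ 3),
   sumN N (fun j => if Nat.eqb j i then 0 else
      gamma * m i * m j * snd (vsub (r j) (r i)) / dist r i j ^ 3)).

Definition updx (r : config) (i : nat) (s : R) : config :=
  fun k => if Nat.eqb k i then (fst (r i) + s, snd (r i)) else r k.
Definition updy (r : config) (i : nat) (s : R) : config :=
  fun k => if Nat.eqb k i then (fst (r i), snd (r i) + s) else r k.

Definition has_partial_i (F : config -> R) (r : config) (i : nat) : Prop :=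
  ex_derive (fun s => F (updx r i s)) 0 /\ ex_derive (fun s => F (updy r i s)) 0.
Definition partial_i (F : config -> R) (r : config) (i : nat) : R * R :=
  (Derive (fun s => F (updx r i s)) 0, Derive (fun s => F (updy r i s)) 0).

Definition stationary (N : nat) (rt : R -> config) : Prop :=
  exists C1 C2, 0 < C1 /\ C1 <= C2 /\
    forall t i j, 0 <= t -> (i < N)%nat -> (j < N)%nat -> i <> j ->
      C1 <= dist (rt t) i j <= C2.

Definition periodic (N : nat) (rt : R -> config) : Prop :=
  exists T, 0 < T /\ forall t i, 0 <= t -> (i < N)%nat -> rt (t + T) i = rt t i.

From Pilot Require Import Defs.
From Stdlib Require Import Reals Lra Lia List FunctionalExtensionality.
From Coquelicot Require Import Coquelicot.
(* Re-imported so that [dist] is the pairwise distance of Defs, not the metric of Reals. *)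
Import Defs.
Open Scope R_scope.

(* Rotations of the plane preserve f, g and the configuration space, so every rotation of a
   minimiser is again a minimiser; r_lambda(t) is the rotation of r_lambda by the angle omega t.
   Hence its mutual distances are constant (stationarity) and it returns after 2 pi / omega.
   At an interior minimum the partial derivatives of f + lambda g vanish, and these are
   F_i and 2 lambda m_i r_i.  Derivatives in y are reduced to derivatives in x through the
   reflection exchanging the two coordinates, which also preserves f and g. *)

Lemma fold_right_Rplus_shift (F : nat -> R) l a :
  fold_right (fun k acc => F k + acc) a l = fold_right (fun k acc => F k + acc) 0 l + a.
Proof. induction l as [|k l IH]; simpl; [ring | rewrite IH; ring]. Qed.

Lemma sumN_S n F : sumN (S n) F = sumN n F + F n.
Proof. unfold sumN. rewrite seq_S, fold_right_app, fold_right_Rplus_shift. simpl. ring. Qed.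

Lemma sumN_ext n F G : (forall k, (k < n)%nat -> F k = G k) -> sumN n F = sumN n G.
Proof.
  induction n as [|n IH]; intros H; [reflexivity|].
  rewrite !sumN_S, IH, H; auto.
Qed.

Lemma sumN_plus n F G : sumN n (fun k => F k + G k) = sumN n F + sumN n G.
Proof.
  induction n as [|n IH]; [unfold sumN; simpl; ring|].
  rewrite !sumN_S, IH. ring.
Qed.

Lemma sumN_zero n F : (forall k, (k < n)%nat -> F k = 0) -> sumN n F = 0.
Proof.
  induction n as [|n IH]; intros H; [reflexivity|].
  rewrite sumN_S, IH, H; auto. ring.
Qed.

Lemma sumN_delta n i X : (i < n)%nat -> sumN n (fun k => if k =? i then X else 0) = X.
Proof.
  induction n as [|n IH]; intros Hi; [lia|].
  rewrite sumN_S. destruct (Nat.eq_dec i n) as [->|Hin].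
  - rewrite Nat.eqb_refl, sumN_zero; [ring|].
    intros k Hk. destruct (Nat.eqb_spec k n); [lia|reflexivity].
  - rewrite IH by lia. destruct (Nat.eqb_spec n i); [lia|ring].
Qed.

Lemma sumN_nonneg n F : (forall k, (k < n)%nat -> 0 <= F k) -> 0 <= sumN n F.
Proof.
  induction n as [|n IH]; intros H; [unfold sumN; simpl; lra|].
  rewrite sumN_S. pose proof (H n (Nat.lt_succ_diag_r n)).
  enough (0 <= sumN n F) by lra. apply IH. intros k Hk. apply H. lia.
Qed.

Lemma sumN_ge n F k : (forall j, (j < n)%nat -> 0 <= F j) -> (k < n)%nat -> F k <= sumN n F.
Proof.
  induction n as [|n IH]; intros H Hk; [lia|].
  rewrite sumN_S. pose proof (H n (Nat.lt_succ_diag_r n)).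
  assert (H' : forall j, (j < n)%nat -> 0 <= F j) by (intros j Hj; apply H; lia).
  destruct (Nat.eq_dec k n) as [->|Hkn].
  - pose proof (sumN_nonneg n F H'). lra.
  - pose proof (IH H' ltac:(lia)). lra.
Qed.

Lemma sumN2_ge n (F : nat -> nat -> R) a b :
  (forall a b, (a < n)%nat -> (b < n)%nat -> 0 <= F a b) -> (a < n)%nat -> (b < n)%nat ->
  F a b <= sumN n (fun a => sumN n (F a)).
Proof.
  intros H Ha Hb.
  apply Rle_trans with (sumN n (F a)); [apply sumN_ge; auto|].
  apply (sumN_ge n (fun a => sumN n (F a))); auto.
  intros j Hj. apply sumN_nonneg. auto.
Qed.

Lemma is_derive_sumN n (F : nat -> R -> R) (D : nat -> R) x :
  (forall k, (k < n)%nat -> is_derive (F k) x (D k)) ->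
  is_derive (fun s => sumN n (fun k => F k s)) x (sumN n D).
Proof.
  induction n as [|n IH]; intros H.
  - unfold sumN; simpl. auto_derive; auto.
  - rewrite sumN_S.
    apply (is_derive_ext (fun s => sumN n (fun k => F k s) + F n s)).
    + intros s. rewrite sumN_S. reflexivity.
    + apply (is_derive_plus (fun s => sumN n (fun k => F k s)) (F n)); auto.
Qed.

Lemma norm2_nonneg u : 0 <= norm2 u.
Proof. apply sqrt_pos. Qed.

Lemma norm2_pos u : u <> (0, 0) -> 0 < norm2 u.
Proof.
  destruct u as [p q]. intros Hpq. unfold norm2; cbn [fst snd]. apply sqrt_lt_R0.
  destruct (Req_dec p 0) as [->|Hp]; [destruct (Req_dec q 0) as [->|Hq]; [congruence|] |].
  - pose proof (pow2_gt_0 q Hq). replace (0 ^ 2) with 0 by ring. lra.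
  - pose proof (pow2_gt_0 p Hp). pose proof (pow2_ge_0 q). lra.
Qed.

Lemma norm2_horizontal s : norm2 (s, 0) = Rabs s.
Proof.
  unfold norm2; cbn [fst snd]. rewrite <- sqrt_Rsqr_abs. f_equal. unfold Rsqr. ring.
Qed.

Lemma vsub_diag u : vsub u u = (0, 0).
Proof. unfold vsub. f_equal; ring. Qed.

Lemma vsub_neq0 u v : u <> v -> vsub u v <> (0, 0).
Proof.
  destruct u as [a b], v as [c d]. unfold vsub; cbn [fst snd]. intros Huv Heq.
  injection Heq as Ha Hb. apply Huv. f_equal; lra.
Qed.

Lemma dist_sym (r : config) i j : dist r i j = dist r j i.
Proof. unfold dist, norm2, vsub; cbn [fst snd]. f_equal. ring. Qed.

Lemma dist_pos (r : config) i j : r i <> r j -> 0 < dist r i j.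
Proof. intros H. apply norm2_pos, vsub_neq0. auto. Qed.

Lemma in_config_space_dist N (r : config) :
  in_config_space N r <->
  forall i j, (i < N)%nat -> (j < N)%nat -> i <> j -> 0 < dist r i j.
Proof.
  split; intros H i j Hi Hj Hij.
  - apply dist_pos, H; auto.
  - intros Heq. pose proof (H i j Hi Hj Hij) as Hd.
    unfold dist in Hd. rewrite Heq, vsub_diag, norm2_horizontal, Rabs_R0 in Hd. lra.
Qed.

Lemma dist_lower_bound N (r : config) : in_config_space N r ->
  exists d, 0 < d /\
    forall i j, (i < N)%nat -> (j < N)%nat -> i <> j -> d <= dist r i j.
Proof.
  intros Hr. rewrite in_config_space_dist in Hr.
  set (F := fun i j => if i =? j then 0 else / dist r i j).
  assert (HF : forall i j, (i < N)%nat -> (j < N)%nat -> 0 <= F i j).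
  { intros i j Hi Hj. unfold F. destruct (Nat.eqb_spec i j); [lra|].
    left. apply Rinv_0_lt_compat, Hr; auto. }
  set (S := sumN N (fun i => sumN N (F i))).
  assert (HS : 0 <= S) by (apply sumN_nonneg; intros; apply sumN_nonneg; auto).
  exists (/ (1 + S)). split; [apply Rinv_0_lt_compat; lra|].
  intros i j Hi Hj Hij. pose proof (Hr i j Hi Hj Hij) as Hd.
  pose proof (sumN2_ge N F i j HF Hi Hj) as Hle. fold S in Hle.
  replace (F i j) with (/ dist r i j) in Hle
    by (unfold F; destruct (Nat.eqb_spec i j); [contradiction | reflexivity]).
  rewrite <- (Rinv_inv (dist r i j)).
  apply Rinv_le_contravar; [apply Rinv_0_lt_compat | ]; lra.
Qed.

Lemma is_derive_inv_norm2_shift c p q : (p, q) <> (0, 0) ->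
  is_derive (fun s => c / norm2 (p - s, q)) 0 (c * p / norm2 (p, q) ^ 3).
Proof.
  intros Hpq. pose proof (norm2_pos _ Hpq) as Hn.
  unfold norm2 in *; cbn [fst snd] in *.
  auto_derive;
    replace ((p + - 0) * ((p + - 0) * 1) + q * (q * 1)) with (p ^ 2 + q ^ 2) by ring.
  - repeat split; [apply sqrt_lt_0_alt; rewrite sqrt_0 | ]; lra.
  - field. lra.
Qed.

Definition orthogonal_map (L : R * R -> R * R) : Prop :=
  (forall u, norm2 (L u) = norm2 u) /\ (forall u v, vsub (L u) (L v) = L (vsub u v)).

Definition rot (th : R) (u : R * R) : R * R :=
  (fst u * cos th - snd u * sin th, snd u * cos th + fst u * sin th).

Definition swap (u : R * R) : R * R := (snd u, fst u).

Lemma rot_orthogonal th : orthogonal_map (rot th).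
Proof.
  split.
  - intros u. unfold norm2, rot; cbn [fst snd]. f_equal.
    pose proof (sin2_cos2 th) as H. unfold Rsqr in H.
    transitivity ((fst u ^ 2 + snd u ^ 2) * (sin th * sin th + cos th * cos th)); [ring|].
    rewrite H. ring.
  - intros u v. unfold vsub, rot; cbn [fst snd]. f_equal; ring.
Qed.

Lemma swap_orthogonal : orthogonal_map swap.
Proof.
  split.
  - intros u. unfold norm2, swap; cbn [fst snd]. f_equal. ring.
  - reflexivity.
Qed.

Lemma rot_polar rho phi th :
  rot th (rho * cos phi, rho * sin phi) = (rho * cos (phi + th), rho * sin (phi + th)).
Proof. unfold rot; cbn [fst snd]. rewrite cos_plus, sin_plus. f_equal; ring. Qed.

Section OrthogonalInvariance.

Variables (N : nat) (L : R * R -> R * R) (r r' : config).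
Hypothesis HL : orthogonal_map L.
Hypothesis Hr' : forall k, (k < N)%nat -> r' k = L (r k).

Lemma dist_orthogonal_map i j : (i < N)%nat -> (j < N)%nat -> dist r' i j = dist r i j.
Proof.
  intros Hi Hj. destruct HL as [Hnorm Hsub].
  unfold dist. rewrite (Hr' i Hi), (Hr' j Hj), Hsub, Hnorm. reflexivity.
Qed.

Lemma in_config_space_orthogonal_map : in_config_space N r -> in_config_space N r'.
Proof.
  rewrite !in_config_space_dist. intros Hr i j Hi Hj Hij.
  rewrite dist_orthogonal_map; auto.
Qed.

Lemma fpot_orthogonal_map gamma m : fpot N gamma m r' = fpot N gamma m r.
Proof.
  apply sumN_ext. intros i Hi. apply sumN_ext. intros j Hj.
  rewrite dist_orthogonal_map; auto.
Qed.

Lemma gmom_orthogonal_map m : gmom N m r' = gmom N m r.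
Proof.
  apply sumN_ext. intros k Hk. rewrite (Hr' k Hk), (proj1 HL). reflexivity.
Qed.

End OrthogonalInvariance.

Definition is_minimizer N gamma m lambda (r : config) : Prop :=
  in_config_space N r /\
  forall r', in_config_space N r' ->
    fpot N gamma m r + lambda * gmom N m r <= fpot N gamma m r' + lambda * gmom N m r'.

Lemma is_minimizer_orthogonal_map N gamma m lambda L (r r' : config) :
  orthogonal_map L -> (forall k, (k < N)%nat -> r' k = L (r k)) ->
  is_minimizer N gamma m lambda r -> is_minimizer N gamma m lambda r'.
Proof.
  intros HL Hr' [Hr Hmin]. split.
  - apply (in_config_space_orthogonal_map N L r r'); auto.
  - rewrite (fpot_orthogonal_map N L r r'), (gmom_orthogonal_map N L r r'); auto.
Qed.

Definition swapc (r : config) : config := fun k => swap (r k).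

Lemma updy_swapc r i s : updy r i s = swapc (updx (swapc r) i s).
Proof.
  apply functional_extensionality. intros k. unfold updx, updy, swapc, swap.
  destruct (k =? i); cbn [fst snd]; [reflexivity | destruct (r k); reflexivity].
Qed.

Lemma Force_swapc N gamma m r i : (i < N)%nat ->
  Force N gamma m (swapc r) i = swap (Force N gamma m r i).
Proof.
  intros Hi. unfold Force, swap; cbn [fst snd].
  f_equal; apply sumN_ext; intros j Hj;
    rewrite (dist_orthogonal_map N swap r (swapc r)); auto using swap_orthogonal.
Qed.

Section Gradients.

Variables (N : nat) (gamma : R) (m : nat -> R) (r : config) (i : nat).
Hypothesis Hi : (i < N)%nat.

Lemma dist_updx_self s j : j <> i ->
  dist (updx r i s) i j = norm2 (fst (vsub (r j) (r i)) - s, snd (vsub (r j) (r i))).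
Proof.
  intros Hji. unfold dist, updx. rewrite Nat.eqb_refl.
  destruct (Nat.eqb_spec j i); [contradiction|].
  unfold norm2, vsub; cbn [fst snd]. do 3 f_equal. ring.
Qed.

Lemma dist_updx_other s a b : a <> i -> b <> i -> dist (updx r i s) a b = dist r a b.
Proof.
  intros Ha Hb. unfold dist, updx.
  destruct (Nat.eqb_spec a i), (Nat.eqb_spec b i); [contradiction..|reflexivity].
Qed.

Lemma is_derive_inv_dist_updx c j : j <> i -> r i <> r j ->
  is_derive (fun s => c / dist (updx r i s) i j) 0
    (c * fst (vsub (r j) (r i)) / dist r i j ^ 3).
Proof.
  intros Hji Hrij.
  apply (is_derive_ext (fun s => c / norm2 (fst (vsub (r j) (r i)) - s, snd (vsub (r j) (r i))))).
  - intros s. rewrite dist_updx_self; auto.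
  - replace (dist r i j) with (norm2 (fst (vsub (r j) (r i)), snd (vsub (r j) (r i))))
      by (rewrite <- surjective_pairing; reflexivity).
    apply is_derive_inv_norm2_shift. rewrite <- surjective_pairing.
    apply vsub_neq0. auto.
Qed.

Let force_x_term j := gamma * m i * m j * fst (vsub (r j) (r i)) / dist r i j ^ 3.

Let pair_term_dx a b :=
  if a <? b then (if a =? i then force_x_term b else 0) + (if b =? i then force_x_term a else 0)
  else 0.

Lemma is_derive_pair_term_updx a b : in_config_space N r -> (a < N)%nat -> (b < N)%nat ->
  is_derive (fun s => if a <? b then gamma * m a * m b / dist (updx r i s) a b else 0) 0
    (pair_term_dx a b).
Proof.
  intros Hr Ha Hb. unfold pair_term_dx.
  destruct (Nat.ltb_spec a b) as [Hab|]; [|auto_derive; auto].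
  destruct (Nat.eqb_spec a i) as [->|Hai]; [|destruct (Nat.eqb_spec b i) as [->|Hbi]].
  - destruct (Nat.eqb_spec b i); [lia|]. rewrite Rplus_0_r.
    apply is_derive_inv_dist_updx; [lia | apply Hr; auto; lia].
  - rewrite Rplus_0_l.
    apply (is_derive_ext (fun s => gamma * m i * m a / dist (updx r i s) i a)).
    + intros s. rewrite dist_sym. f_equal. ring.
    + apply is_derive_inv_dist_updx; [lia | apply Hr; auto; lia].
  - rewrite Rplus_0_l.
    apply (is_derive_ext (fun _ => gamma * m a * m b / dist r a b)); [|auto_derive; auto].
    intros s. rewrite dist_updx_other; auto.
Qed.

Lemma sumN_pair_term_dx :
  sumN N (fun a => sumN N (pair_term_dx a)) = fst (Force N gamma m r i).
Proof.
  transitivity (sumN N (fun a =>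
    (if a =? i then sumN N (fun b => if i <? b then force_x_term b else 0) else 0)
    + (if a <? i then force_x_term a else 0))).
  - apply sumN_ext. intros a Ha. unfold pair_term_dx.
    destruct (Nat.eqb_spec a i) as [->|Hai].
    + rewrite Nat.ltb_irrefl, Rplus_0_r. apply sumN_ext. intros b Hb.
      destruct (Nat.ltb_spec i b); [|reflexivity].
      destruct (Nat.eqb_spec b i); [lia|]. ring.
    + rewrite Rplus_0_l, <- (sumN_delta N i (if a <? i then force_x_term a else 0) Hi).
      apply sumN_ext. intros b Hb.
      destruct (Nat.eqb_spec b i) as [->|]; destruct (Nat.ltb a _); ring.
  - rewrite sumN_plus, sumN_delta, <- sumN_plus by exact Hi.
    apply sumN_ext. intros j Hj. fold (force_x_term j).
    destruct (Nat.eqb_spec j i), (Nat.ltb_spec i j), (Nat.ltb_spec j i); try lia; ring.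
Qed.

Lemma is_derive_fpot_updx : in_config_space N r ->
  is_derive (fun s => fpot N gamma m (updx r i s)) 0 (fst (Force N gamma m r i)).
Proof.
  intros Hr. rewrite <- sumN_pair_term_dx. unfold fpot.
  apply (is_derive_sumN N (fun a s => sumN N (fun b =>
    if a <? b then gamma * m a * m b / dist (updx r i s) a b else 0))).
  intros a Ha. apply is_derive_sumN. intros b Hb. apply is_derive_pair_term_updx; auto.
Qed.

Lemma is_derive_gmom_updx :
  is_derive (fun s => gmom N m (updx r i s)) 0 (2 * m i * fst (r i)).
Proof.
  unfold gmom. rewrite <- (sumN_delta N i (2 * m i * fst (r i)) Hi).
  apply is_derive_sumN. intros k Hk. unfold updx.
  destruct (Nat.eqb_spec k i) as [->|]; [|auto_derive; auto].
  apply (is_derive_ext (fun s => m i * ((fst (r i) + s) ^ 2 + snd (r i) ^ 2))).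
  - intros s. unfold norm2; cbn [fst snd].
    rewrite pow2_sqrt; [reflexivity|]. pose proof (pow2_ge_0 (fst (r i) + s)).
    pose proof (pow2_ge_0 (snd (r i))). lra.
  - auto_derive; [auto|]. ring.
Qed.

End Gradients.

Lemma in_config_space_swapc N r : in_config_space N r -> in_config_space N (swapc r).
Proof. apply (in_config_space_orthogonal_map N swap); auto using swap_orthogonal. Qed.

Lemma is_derive_updy_of_swapc (F : config -> R) r i l :
  (forall r', F (swapc r') = F r') ->
  is_derive (fun s => F (updx (swapc r) i s)) 0 l ->
  is_derive (fun s => F (updy r i s)) 0 l.
Proof.
  intros HF. apply is_derive_ext. intros s. rewrite updy_swapc, HF. reflexivity.
Qed.

Lemma partial_i_of_is_derive (F : config -> R) r i (v : R * R) :
  is_derive (fun s => F (updx r i s)) 0 (fst v) ->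
  is_derive (fun s => F (updy r i s)) 0 (snd v) ->
  has_partial_i F r i /\ partial_i F r i = v.
Proof.
  intros Hx Hy. split; [split; eexists; eassumption|].
  unfold partial_i. rewrite (surjective_pairing v).
  f_equal; apply is_derive_unique; assumption.
Qed.

Lemma partial_i_fpot N gamma m r i : in_config_space N r -> (i < N)%nat ->
  has_partial_i (fpot N gamma m) r i /\ partial_i (fpot N gamma m) r i = Force N gamma m r i.
Proof.
  intros Hr Hi. apply partial_i_of_is_derive.
  - apply is_derive_fpot_updx; auto.
  - apply is_derive_updy_of_swapc.
    + intros r'. apply (fpot_orthogonal_map N swap); auto using swap_orthogonal.
    + replace (snd (Force N gamma m r i)) with (fst (Force N gamma m (swapc r) i))
        by (rewrite Force_swapc; auto).
      apply is_derive_fpot_updx; auto using in_config_space_swapc.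
Qed.

Lemma partial_i_gmom N m r i : (i < N)%nat ->
  has_partial_i (gmom N m) r i /\
  partial_i (gmom N m) r i = (2 * m i * fst (r i), 2 * m i * snd (r i)).
Proof.
  intros Hi. apply partial_i_of_is_derive.
  - apply is_derive_gmom_updx; auto.
  - apply is_derive_updy_of_swapc.
    + intros r'. apply (gmom_orthogonal_map N swap); auto using swap_orthogonal.
    + apply (is_derive_gmom_updx N m (swapc r)); auto.
Qed.

Lemma is_derive_local_min (h : R -> R) l d : 0 < d -> is_derive h 0 l ->
  (forall s, Rabs s < d -> h 0 <= h s) -> l = 0.
Proof.
  intros Hd H Hmin. apply is_derive_Reals in H.
  change l with (derive_pt h 0 (exist _ l H)).
  apply deriv_minimum with (- d) d; [lra | lra |].
  intros s H1 H2. apply Hmin. apply Rabs_def1; lra.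
Qed.

Lemma in_config_space_updx N r i s d : in_config_space N r ->
  (forall a b, (a < N)%nat -> (b < N)%nat -> a <> b -> d <= dist r a b) ->
  Rabs s < d -> in_config_space N (updx r i s).
Proof.
  intros Hr Hd Hs.
  assert (Hmoved : forall j, (i < N)%nat -> (j < N)%nat -> j <> i ->
                     r j <> (fst (r i) + s, snd (r i))).
  { intros j Hi Hj Hji Heq. pose proof (Hd i j Hi Hj (not_eq_sym Hji)) as Hdij.
    unfold dist in Hdij. rewrite Heq in Hdij. unfold vsub in Hdij; cbn [fst snd] in Hdij.
    replace (fst (r i) + s - fst (r i), snd (r i) - snd (r i)) with (s, 0) in Hdij
      by (f_equal; ring).
    rewrite norm2_horizontal in Hdij. lra. }
  intros a b Ha Hb Hab. unfold updx.
  destruct (Nat.eqb_spec a i) as [->|Hai], (Nat.eqb_spec b i) as [->|Hbi].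
  - contradiction.
  - apply not_eq_sym, Hmoved; auto.
  - apply Hmoved; auto.
  - apply Hr; auto.
Qed.

Lemma minimizer_force_fst N gamma m lambda r i :
  is_minimizer N gamma m lambda r -> (i < N)%nat ->
  fst (Force N gamma m r i) = -2 * lambda * m i * fst (r i).
Proof.
  intros [Hr Hmin] Hi.
  destruct (dist_lower_bound N r Hr) as [d [Hd Hdist]].
  assert (Hr0 : updx r i 0 = r).
  { apply functional_extensionality. intros k. unfold updx.
    destruct (Nat.eqb_spec k i) as [->|]; [|reflexivity].
    rewrite Rplus_0_r. symmetry. apply surjective_pairing. }
  enough (fst (Force N gamma m r i) + lambda * (2 * m i * fst (r i)) = 0) by lra.
  apply (is_derive_local_min
    (fun s => fpot N gamma m (updx r i s) + lambda * gmom N m (updx r i s)) _ d Hd).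
  - apply (is_derive_plus (fun s => fpot N gamma m (updx r i s))).
    + apply is_derive_fpot_updx; auto.
    + apply is_derive_scal, is_derive_gmom_updx; auto.
  - intros s Hs. rewrite Hr0. apply Hmin.
    apply (in_config_space_updx N r i s d); auto.
Qed.

Lemma minimizer_force N gamma m lambda r i :
  is_minimizer N gamma m lambda r -> (i < N)%nat ->
  Force N gamma m r i = (-2 * lambda * m i * fst (r i), -2 * lambda * m i * snd (r i)).
Proof.
  intros Hmin Hi. rewrite (surjective_pairing (Force N gamma m r i)). f_equal.
  - apply minimizer_force_fst; auto.
  - change (snd (Force N gamma m r i)) with (fst (swap (Force N gamma m r i))).
    rewrite <- Force_swapc by exact Hi.
    apply minimizer_force_fst; auto.
    apply (is_minimizer_orthogonal_map N gamma m lambda swap r); auto using swap_orthogonal.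
Qed.

Lemma stationary_of_rigid N (r : config) (rt : R -> config) : (2 <= N)%nat ->
  in_config_space N r ->
  (forall t a b, 0 <= t -> (a < N)%nat -> (b < N)%nat -> dist (rt t) a b = dist r a b) ->
  stationary N rt.
Proof.
  intros HN Hr Hrigid.
  destruct (dist_lower_bound N r Hr) as [d [Hd Hdist]].
  set (C2 := sumN N (fun a => sumN N (fun b => dist r a b))).
  assert (HC2 : forall a b, (a < N)%nat -> (b < N)%nat -> dist r a b <= C2)
    by (intros a b Ha Hb; apply (sumN2_ge N (dist r)); auto; intros; apply norm2_nonneg).
  exists d, C2. split; [exact Hd|]. split.
  - apply Rle_trans with (dist r 0 1); [apply Hdist | apply HC2]; lia.
  - intros t a b Ht Ha Hb Hab. rewrite Hrigid by auto. auto.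
Qed.

Lemma uniform_rotation_periodic N (rho phi : nat -> R) omega : 0 < omega ->
  periodic N (fun t i =>
    (rho i * cos (phi i + omega * t), rho i * sin (phi i + omega * t))).
Proof.
  intros Hom. exists (2 * PI / omega). split.
  - pose proof PI_RGT_0. apply Rdiv_lt_0_compat; lra.
  - intros t i _ _.
    replace (phi i + omega * (t + 2 * PI / omega)) with (phi i + omega * t + 2 * PI)
      by (field; lra).
    set (x := phi i + omega * t).
    rewrite (cos_plus x), (sin_plus x), cos_2PI, sin_2PI. f_equal; ring.
Qed.

Theorem theorem3p2 (N : nat) (m : nat -> R) (gamma lambda : R)
  (rl : config) (phi : nat -> R) :
  (2 <= N)%nat ->
  (forall i, (i < N)%nat -> 0 < m i) ->
  0 < gamma ->
  0 < lambda ->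
  (* rl is a minimum point of f + lambda g on the configuration space *)
  in_config_space N rl ->
  (forall r, in_config_space N r ->
     fpot N gamma m rl + lambda * gmom N m rl <= fpot N gamma m r + lambda * gmom N m r) ->
  (* polar angles of the bodies of rl *)
  (forall i, (i < N)%nat ->
     rl i = (norm2 (rl i) * cos (phi i), norm2 (rl i) * sin (phi i))) ->
  let omega := sqrt (2 * lambda) in
  let rt : R -> config := fun t i =>
     (norm2 (rl i) * cos (phi i + omega * t), norm2 (rl i) * sin (phi i + omega * t)) in
  stationary N rt /\ periodic N rt /\
  forall t i, 0 <= t -> (i < N)%nat ->
    has_partial_i (fpot N gamma m) (rt t) i /\
    has_partial_i (gmom N m) (rt t) i /\
    partial_i (fpot N gamma m) (rt t) i =
      (- lambda * fst (partial_i (gmom N m) (rt t) i),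
       - lambda * snd (partial_i (gmom N m) (rt t) i)) /\
    Force N gamma m (rt t) i =
      (-2 * lambda * m i * fst (rt t i), -2 * lambda * m i * snd (rt t i)).
Proof.
  (* Positivity of the masses and of gamma only matters for the existence of a minimiser. *)
  intros HN _ _ Hl Hconf Hmin Hpolar omega rt.
  assert (Hrot : forall t k, (k < N)%nat -> rt t k = rot (omega * t) (rl k)).
  { intros t k Hk. unfold rt. rewrite <- rot_polar, <- Hpolar by exact Hk. reflexivity. }
  assert (Hmin_t : forall t, is_minimizer N gamma m lambda (rt t)).
  { intros t. apply (is_minimizer_orthogonal_map N gamma m lambda (rot (omega * t)) rl);
      auto using rot_orthogonal. split; assumption. }
  split; [|split].
  - apply (stationary_of_rigid N rl); auto.
    intros t a b _ Ha Hb. apply (dist_orthogonal_map N (rot (omega * t))); auto using rot_orthogonal.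
  - apply (uniform_rotation_periodic N (fun i => norm2 (rl i))).
    apply sqrt_lt_R0. lra.
  - intros t i _ Hi.
    destruct (partial_i_fpot N gamma m (rt t) i (proj1 (Hmin_t t)) Hi) as [Hf ->].
    destruct (partial_i_gmom N m (rt t) i Hi) as [Hg ->].
    rewrite (minimizer_force N gamma m lambda (rt t) i (Hmin_t t) Hi); cbn [fst snd].
    split; [exact Hf|]. split; [exact Hg|]. split; [f_equal; ring | reflexivity].
Qed.
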